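(* Let $f\colon X\to Y$ be a function of metric spaces and $A,B\subset X$. Suppose all $(r^A_X,r^A_Y)$-components of $A$ are $(R^A_X,R^A_Y)$-bounded and all $(r^B_X,r^B_Y)$-components of $B$ are $(R^B_X,R^B_Y)$-bounded. If $R^B_X+2r^B_X<r^A_X$ and $R^B_Y+2r^B_Y<r^A_Y$, then all $(r^B_X,r^B_Y)$-components of $A\cup B$ are $(R^A_X+2r^A_X,\,R^A_Y+2r^A_Y)$-bounded.
   Context: For $f\colon X\to Y$ and positive numbers $r_X,r_Y$: a set $C\subset X$ is $(r_X,r_Y)$-bounded if $d_X(x,x')\le r_X$ and $d_Y(f(x),f(x'))\le r_Y$ for all $x,x'\in C$. An $(r_X,r_Y)$-chain in $C$ is a sequence $x_1,\dots,x_j$ of points of $C$ such that each pair $\{x_i,x_{i+1}\}$ is $(r_X,r_Y)$-bounded. The $(r_X,r_Y)$-components of $C$ are the maximal subsets of $C$ any two points of which are joined by an $(r_X,r_Y)$-chain in $C$. *)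

From Stdlib Require Import Reals List.
Open Scope R_scope.

Definition is_metric {T : Type} (d : T -> T -> R) : Prop :=
  (forall x y, 0 <= d x y) /\
  (forall x y, d x y = 0 <-> x = y) /\
  (forall x y, d x y = d y x) /\
  (forall x y z, d x z <= d x y + d y z).

Section Comp.
Context {X Y : Type} (dX : X -> X -> R) (dY : Y -> Y -> R) (f : X -> Y).

Definition xy_bounded (rX rY : R) (C : X -> Prop) : Prop :=
  forall x x', C x -> C x' -> dX x x' <= rX /\ dY (f x) (f x') <= rY.

Definition pair_bounded (rX rY : R) (x x' : X) : Prop :=
  xy_bounded rX rY (fun z => z = x \/ z = x').

(* x :: l is an (rX,rY)-chain in C (assuming C x) *)
Fixpoint chain_from (rX rY : R) (C : X -> Prop) (x : X) (l : list X) : Prop :=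
  match l with
  | nil => True
  | y :: l' => C y /\ pair_bounded rX rY x y /\ chain_from rX rY C y l'
  end.

Definition joined (rX rY : R) (C : X -> Prop) (x y : X) : Prop :=
  C x /\ exists l, chain_from rX rY C x l /\ last l x = y.

Definition is_component (rX rY : R) (C K : X -> Prop) : Prop :=
  (forall x, K x -> C x) /\
  (forall x y, K x -> K y -> joined rX rY C x y) /\
  (forall K' : X -> Prop,
      (forall x, K x -> K' x) -> (forall x, K' x -> C x) ->
      (forall x y, K' x -> K' y -> joined rX rY C x y) ->
      forall x, K' x -> K x).
End Comp.

(** Joinability by (r_X,r_Y)-chains in a set C is the reflexive-transitive
    closure of the relation "one (r_X,r_Y)-step inside C", so components are
    exactly its classes and every bound on components bounds the distance of
    any two chain-connected points.

    Follow an (r^B_X,r^B_Y)-chain of A ∪ B.  Between two consecutive points of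
    A it runs through a (possibly empty) chain of B, whose diameter is at most
    R^B by hypothesis, so these two points are within R^B + 2 r^B < r^A of each
    other: all points of A on the chain lie in one (r^A_X,r^A_Y)-component of A,
    of diameter at most R^A.  The end points of the chain are either on A or
    within R^B + r^B < r^A of one, which gives R^A + 2 r^A.  A chain that never
    meets A stays in one component of B. *)
From Stdlib Require Import Reals Lra List Relations.
Open Scope R_scope.

Section Metric.
Context {T : Type} (d : T -> T -> R) (md : is_metric d).

Lemma metric_self x : d x x = 0.
Proof. destruct md as [_ [H _]]. now apply H. Qed.

Lemma metric_sym x y : d x y = d y x.
Proof. destruct md as [_ [_ [H _]]]. apply H. Qed.

Lemma metric_triangle x y z : d x z <= d x y + d y z.
Proof. destruct md as [_ [_ [_ H]]]. apply H. Qed.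

End Metric.

Section Chains.
Context {X Y : Type} (dX : X -> X -> R) (dY : Y -> Y -> R) (f : X -> Y).
Hypothesis mX : is_metric dX.
Hypothesis mY : is_metric dY.

Definition link (C : X -> Prop) (rX rY : R) (u v : X) : Prop :=
  C u /\ C v /\ dX u v <= rX /\ dY (f u) (f v) <= rY.

Definition linked (C : X -> Prop) (rX rY : R) : relation X :=
  clos_refl_trans X (link C rX rY).

Lemma pair_boundedP rX rY u v : 0 <= rX -> 0 <= rY ->
  pair_bounded dX dY f rX rY u v <-> dX u v <= rX /\ dY (f u) (f v) <= rY.
Proof.
  intros hX hY; split; [intros H; apply H; auto|].
  intros [h1 h2] a b [-> | ->] [-> | ->];
    rewrite ?(metric_self dX mX), ?(metric_self dY mY); try lra;
    rewrite (metric_sym dX mX), (metric_sym dY mY); lra.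
Qed.

Lemma link_sym C rX rY u v : link C rX rY u v -> link C rX rY v u.
Proof.
  intros (Cu & Cv & h1 & h2); repeat split; auto;
    [rewrite (metric_sym dX mX) | rewrite (metric_sym dY mY)]; auto.
Qed.

Lemma linked_sym C rX rY u v : linked C rX rY u v -> linked C rX rY v u.
Proof.
  induction 1.
  - now apply rt_step, link_sym.
  - apply rt_refl.
  - eapply rt_trans; eauto.
Qed.

Lemma linked_in C rX rY u v : linked C rX rY u v -> C u -> C v.
Proof. induction 1; auto. intros _; apply H. Qed.

Lemma last_cons_default (l : list X) x a b : last (x :: l) a = last (x :: l) b.
Proof. revert x; induction l as [|y l IH]; intros x; [reflexivity | apply IH]. Qed.

Lemma joined_linked C rX rY u v : joined dX dY f rX rY C u v -> linked C rX rY u v.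
Proof.
  intros [Cu [l [Hl Hlast]]]; revert u Cu Hl Hlast.
  induction l as [|w l IH]; intros u Cu Hl Hlast; simpl in Hlast.
  - subst; apply rt_refl.
  - destruct Hl as (Cw & Huw & Hl); apply rt_trans with w.
    + apply rt_step; split; [|split]; auto; apply Huw; auto.
    + apply IH; auto. rewrite <- Hlast; destruct l; [reflexivity | apply last_cons_default].
Qed.

Lemma linked_joined C rX rY u v : 0 <= rX -> 0 <= rY ->
  C u -> linked C rX rY u v -> joined dX dY f rX rY C u v.
Proof.
  intros hX hY Cu H; split; auto.
  apply clos_rt_rt1n in H; induction H as [|u w v Huw _ IH].
  - now exists nil.
  - destruct Huw as (_ & Cw & h1 & h2).
    destruct (IH Cw) as [l [Hl Hlast]].
    exists (w :: l); split.
    + split; [auto | split; [now apply pair_boundedP | exact Hl]].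
    + rewrite <- Hlast; simpl; destruct l; [reflexivity | apply last_cons_default].
Qed.

Lemma linked_component C rX rY c : 0 <= rX -> 0 <= rY -> C c ->
  is_component dX dY f rX rY C (linked C rX rY c).
Proof.
  intros hX hY Cc; split; [|split].
  - intros x H; eapply linked_in; eauto.
  - intros x y Hx Hy; apply linked_joined; auto.
    + eapply linked_in; eauto.
    + eapply rt_trans; [apply linked_sym; exact Hx | exact Hy].
  - intros K' HK _ Hj x Hx; apply joined_linked, Hj; auto. apply HK, rt_refl.
Qed.

Lemma linked_bounded C rX rY RX RY u v : 0 <= rX -> 0 <= rY ->
  (forall K, is_component dX dY f rX rY C K -> xy_bounded dX dY f RX RY K) ->
  C u -> linked C rX rY u v -> dX u v <= RX /\ dY (f u) (f v) <= RY.
Proof.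
  intros hX hY HC Cu H.
  apply (HC _ (linked_component C rX rY u hX hY Cu)); auto. apply rt_refl.
Qed.

End Chains.

Section Union.
Context {X Y : Type} (dX : X -> X -> R) (dY : Y -> Y -> R) (f : X -> Y).
Hypothesis mX : is_metric dX.
Hypothesis mY : is_metric dY.
Variables (A B : X -> Prop) (rAX rAY RAX RAY rBX rBY RBX RBY : R).
Hypothesis rBX_ge0 : 0 <= rBX.
Hypothesis rBY_ge0 : 0 <= rBY.
Hypothesis RBX_ge0 : 0 <= RBX.
Hypothesis RBY_ge0 : 0 <= RBY.
Hypothesis RAX_ge0 : 0 <= RAX.
Hypothesis RAY_ge0 : 0 <= RAY.
Hypothesis A_components_bounded :
  forall K, is_component dX dY f rAX rAY A K -> xy_bounded dX dY f RAX RAY K.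
Hypothesis B_components_bounded :
  forall K, is_component dX dY f rBX rBY B K -> xy_bounded dX dY f RBX RBY K.
Hypothesis gapX : RBX + 2 * rBX <= rAX.
Hypothesis gapY : RBY + 2 * rBY <= rAY.

Let AB := fun x => A x \/ B x.

Definition attached (a z : X) : Prop :=
  a = z \/ exists b, B b /\ dX a b <= rBX /\ dY (f a) (f b) <= rBY /\
                     linked dX dY f B rBX rBY b z.

Lemma attached_refl a : attached a a.
Proof. now left. Qed.

Lemma attached_extend a z z' : attached a z -> B z' ->
  dX z z' <= rBX -> dY (f z) (f z') <= rBY -> attached a z'.
Proof.
  intros [<- | (b & Bb & h1 & h2 & Hbz)] Bz' s1 s2; right.
  - exists z'; repeat split; auto. apply rt_refl.
  - exists b; repeat split; auto.
    eapply rt_trans; [exact Hbz | apply rt_step].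
    repeat split; auto. eapply linked_in; eauto.
Qed.

Lemma attached_dist a z : attached a z ->
  dX a z <= RBX + rBX /\ dY (f a) (f z) <= RBY + rBY.
Proof.
  intros [<- | (b & Bb & h1 & h2 & Hbz)].
  - rewrite (metric_self dX mX), (metric_self dY mY); lra.
  - destruct (linked_bounded dX dY f mX mY B rBX rBY RBX RBY b z) as [u1 u2]; auto.
    pose proof (metric_triangle dX mX a b z).
    pose proof (metric_triangle dY mY (f a) (f b) (f z)); lra.
Qed.

Lemma linked_union_from_A u z : A u -> linked dX dY f AB rBX rBY u z ->
  exists a, linked dX dY f A rAX rAY u a /\ attached a z.
Proof.
  intros Au H; apply clos_rt_rtn1 in H.
  induction H as [|z z' Hzz' _ (a & Hua & Haz)].
  - exists u; split; [apply rt_refl | apply attached_refl].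
  - destruct Hzz' as (_ & [Az' | Bz'] & s1 & s2).
    + exists z'; split; [|apply attached_refl].
      eapply rt_trans; [exact Hua | apply rt_step].
      destruct (attached_dist a z Haz) as [t1 t2].
      pose proof (metric_triangle dX mX a z z').
      pose proof (metric_triangle dY mY (f a) (f z) (f z')).
      repeat split; auto; [eapply linked_in; eauto | lra | lra].
    + exists a; split; auto. eapply attached_extend; eauto.
Qed.

Lemma linked_union_first_A x z : AB x -> linked dX dY f AB rBX rBY x z ->
  (B x /\ linked dX dY f B rBX rBY x z) \/
  exists a, A a /\ attached a x /\ linked dX dY f AB rBX rBY a z.
Proof.
  intros ABx H; destruct ABx as [Ax | Bx].
  { right; exists x; repeat split; auto; apply attached_refl. }
  apply clos_rt_rt1n in H; induction H as [x | x y z Hxy Hyz IH].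
  { left; split; [exact Bx | apply rt_refl]. }
  apply clos_rt1n_rt in Hyz.
  destruct (link_sym dX dY f mX mY _ _ _ _ _ Hxy) as (ABy & _ & s1 & s2).
  destruct ABy as [Ay | By].
  - right; exists y; repeat split; auto.
    eapply attached_extend; eauto; apply attached_refl.
  - destruct (IH By) as [HB | (a & Aa & Hay & Haz)].
    + left; split; auto.
      eapply rt_trans; [apply rt_step | exact (proj2 HB)]; repeat split; auto; apply Hxy.
    + right; exists a; repeat split; auto. eapply attached_extend; eauto.
Qed.

Lemma linked_union_bounded x x' : AB x -> linked dX dY f AB rBX rBY x x' ->
  dX x x' <= RAX + 2 * rAX /\ dY (f x) (f x') <= RAY + 2 * rAY.
Proof.
  intros ABx H.
  destruct (linked_union_first_A x x' ABx H) as [[Bx HB] | (a & Aa & Hax & Hax')].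
  - destruct (linked_bounded dX dY f mX mY B rBX rBY RBX RBY x x') as [u1 u2];
      auto; lra.
  - destruct (linked_union_from_A a x' Aa Hax') as (a' & Haa' & Ha'x').
    destruct (linked_bounded dX dY f mX mY A rAX rAY RAX RAY a a') as [u1 u2];
      auto; try lra.
    destruct (attached_dist a x Hax) as [v1 v2].
    destruct (attached_dist a' x' Ha'x') as [w1 w2].
    rewrite (metric_sym dX mX) in v1; rewrite (metric_sym dY mY) in v2.
    pose proof (metric_triangle dX mX x a a').
    pose proof (metric_triangle dX mX x a' x').
    pose proof (metric_triangle dY mY (f x) (f a) (f a')).
    pose proof (metric_triangle dY mY (f x) (f a') (f x')).
    lra.
Qed.

End Union.

Theorem mainTheorem8 (X Y : Type) (dX : X -> X -> R) (dY : Y -> Y -> R)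
  (f : X -> Y) (A B : X -> Prop)
  (rAX rAY RAX RAY rBX rBY RBX RBY : R) :
  is_metric dX -> is_metric dY ->
  0 < rAX -> 0 < rAY -> 0 < RAX -> 0 < RAY ->
  0 < rBX -> 0 < rBY -> 0 < RBX -> 0 < RBY ->
  (forall K, is_component dX dY f rAX rAY A K -> xy_bounded dX dY f RAX RAY K) ->
  (forall K, is_component dX dY f rBX rBY B K -> xy_bounded dX dY f RBX RBY K) ->
  RBX + 2 * rBX < rAX -> RBY + 2 * rBY < rAY ->
  forall K, is_component dX dY f rBX rBY (fun x => A x \/ B x) K ->
    xy_bounded dX dY f (RAX + 2 * rAX) (RAY + 2 * rAY) K.
Proof.
  intros mX mY _ _ hRAX hRAY hrBX hrBY hRBX hRBY HA HB gX gY K [HKin [HKjoined _]] x x' Kx Kx'.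
  apply (linked_union_bounded dX dY f mX mY A B rAX rAY RAX RAY rBX rBY RBX RBY);
    try lra; auto.
  apply (joined_linked dX dY f), HKjoined; auto.
Qed.
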